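(* Let $n\geq1$, $1\leq l\leq n$, $m\leq n-l+1$ and $\eta\in\Omega$. Let $(a_{\bar w})_{\bar w\in\overline{T_\eta}}$ be complex numbers with $\sum_{\bar w\in\overline{T_\eta}}a_{\bar w}\bar w=0$ in $\mathbb C^{\lambda_{2,n}}$. Suppose $E=\{(c_1,l),\ldots,(c_m,l)\}\subset T_\eta$ for some $0<c_1<\cdots<c_m$, and that $a_{\bar u}=0$ for every $u\in T_\eta\setminus E$ with $\pi_2(u)\geq l$. Then $a_{\bar v}=0$ for all $v\in E$. The same holds with $E=\{(l,c_1),\ldots,(l,c_m)\}$ and the condition $\pi_2(u)\geq l$ replaced by $\pi_1(u)\geq l$.
   Context: $\pi_i$ is the $i$-th coordinate. $\Lambda_{2,n}=\{\alpha\in\mathbb N^2:1\leq\alpha_1+\alpha_2\leq n\}$, $\lambda_{2,n}=|\Lambda_{2,n}|$; $\bar v=\big(\binom{v_1}{\alpha_1}\binom{v_2}{\alpha_2}\big)_{\alpha\in\Lambda_{2,n}}$. $\Omega$ is the set of $\eta=(z,d_0,\ldots,d_r)$ with $z\in\{0,1\}$, $d_0=0$, $d_i\geq1$, $\sum d_i=n$. For $1\leq j\leq n$, $t$ unique with $\sum_{i<t}d_i<j\leq\sum_{i\leq t}d_i$, $c=j-\sum_{i<t}d_i$; $v_{j,\eta}=(\sum_{i\text{ odd},i<t}d_i+c,0)$ if $z=1,t$ odd; $(0,\sum_{i\text{ even},i<t}d_i+c)$ if $z=1,t$ even; $(0,\sum_{i\text{ odd},i<t}d_i+c)$ if $z=0,t$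 odd; $(\sum_{i\text{ even},i<t}d_i+c,0)$ if $z=0,t$ even. $T_{j,\eta}=\{v_{j,\eta}+p(1,1):0\leq p\leq n-j\}$, $T_{0,\eta}=\{(p,p):1\leq p\leq n\}$, $T_\eta=\bigcup_{j=0}^nT_{j,\eta}$, $\overline{T_\eta}=\{\bar w:w\in T_\eta\}$ (distinct elements of $T_\eta$ give distinct vectors). *)

From HB Require Import structures.
From mathcomp Require Import all_boot all_order all_algebra.
From mathcomp Require Import Rstruct complex.
From Stdlib Require Rdefinitions.
Set Implicit Arguments. Unset Strict Implicit. Unset Printing Implicit Defensive.

Definition CC : numClosedFieldType := (Rdefinitions.R)[i].

(* eta = (z, d_0, d_1, ..., d_r) is encoded as (z, [:: d_1; ...; d_r]),
   with z = true meaning z = 1 and z = false meaning z = 0; d_0 = 0 implicit. *)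
Definition eta_t := (bool * seq nat)%type.

Definition in_Omega (n : nat) (eta : eta_t) : bool :=
  all (fun d => 0 < d) eta.2 && (sumn eta.2 == n).

Definition dd (ds : seq nat) (i : nat) : nat :=
  if i is i'.+1 then nth 0 ds i' else 0.

Definition Spre (ds : seq nat) (t : nat) : nat := \sum_(i < t) dd ds i.
Definition Sodd (ds : seq nat) (t : nat) : nat := \sum_(i < t | odd i) dd ds i.
Definition Seven (ds : seq nat) (t : nat) : nat := \sum_(i < t | ~~ odd i) dd ds i.

(* the (unique) t with sum_{i<t} d_i < j <= sum_{i<=t} d_i,
   computed as the least t with j <= sum_{i<=t} d_i *)
Definition tidx (ds : seq nat) (j : nat) : nat :=
  find (fun t => j <= Spre ds t.+1) (iota 0 (size ds).+1).

Definition vj (eta : eta_t) (j : nat) : nat * nat :=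
  let ds := eta.2 in
  let t := tidx ds j in
  let c := j - Spre ds t in
  if eta.1 then
    (if odd t then (Sodd ds t + c, 0) else (0, Seven ds t + c))
  else
    (if odd t then (0, Sodd ds t + c) else (Seven ds t + c, 0)).

Definition Tj (n : nat) (eta : eta_t) (j : nat) : seq (nat * nat) :=
  [seq ((vj eta j).1 + p, (vj eta j).2 + p) | p <- iota 0 (n - j).+1].

Definition T0 (n : nat) : seq (nat * nat) := [seq (p, p) | p <- iota 1 n].

Definition Teta (n : nat) (eta : eta_t) : seq (nat * nat) :=
  undup (T0 n ++ flatten [seq Tj n eta j | j <- iota 1 n]).

Definition inLambda (n : nat) (alpha : nat * nat) : bool :=
  (1 <= alpha.1 + alpha.2 <= n).

(* the alpha-coordinate of \bar w *)
Definition barw (w alpha : nat * nat) : nat :=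
  'C(w.1, alpha.1) * 'C(w.2, alpha.2).

Definition lin_rel (n : nat) (eta : eta_t) (a : nat * nat -> CC) : Prop :=
  forall alpha, inLambda n alpha ->
    (\sum_(w <- Teta n eta) a w * (barw w alpha)%:R = 0)%R.

(* Restricted to the coordinates alpha = (k, l) with k < m, the relation
   sum_w a_w \bar w = 0 only sees the points w with pi_2(w) >= l, since
   'C(w_2, l) = 0 otherwise; by hypothesis only the points of E survive, and
   there \bar w_alpha = 'C(c_i, k).  So sum_i a_(c_i, l) 'C(c_i, k) = 0 for all
   k < m, and the matrix ('C(c_i, k))_(i, k < m) is invertible for distinct c_i
   (a Vandermonde matrix in the basis of binomial polynomials).  The second
   version is the same argument with the coordinates exchanged. *)
From HB Require Import structures.
From mathcomp Require Import all_boot all_order all_algebra.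
From mathcomp Require Import Rstruct complex.
From mathcomp Require Import ring zify.
Import GRing.Theory Num.Theory.

Lemma mul_bin_shift (x k : nat) : x * 'C(x, k) = k.+1 * 'C(x, k.+1) + k * 'C(x, k).
Proof.
rewrite mul_bin_left -mulnDl.
by case: (leqP k x) => [/subnK -> // | /bin_small ->]; rewrite !muln0.
Qed.

Local Open Scope ring_scope.

Lemma sum_supp_subset (V : nmodType) (I : eqType) (s t : seq I) (F : I -> V) :
  uniq s -> uniq t -> {subset t <= s} -> {in s, forall i, i \notin t -> F i = 0} ->
  \sum_(i <- s) F i = \sum_(i <- t) F i.
Proof.
move=> us ut ts F0.
have st : perm_eq t [seq i <- s | i \in t].
  apply: uniq_perm => [//| |i]; first exact: filter_uniq.
  by rewrite mem_filter andb_idr //; apply: ts.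
have off_t0 : \sum_(i <- s | i \notin t) F i = 0.
  by rewrite big_seq_cond big1 // => i /andP[]; apply: F0.
by rewrite (bigID (mem t)) /= off_t0 addr0 -big_filter (perm_big _ st).
Qed.

Lemma binomial_moments_eq0 (R : numDomainType) (xs : seq nat) (b : nat -> R) :
  uniq xs -> (forall k, (k < size xs)%N -> \sum_(x <- xs) b x * 'C(x, k)%:R = 0) ->
  {in xs, forall x, b x = 0}.
Proof.
elim: xs b => [|x0 xs IH] b //= /andP[x0_xs uxs] moments0.
(* (x - x0) 'C(x, k) = (k + 1) 'C(x, k + 1) + (k - x0) 'C(x, k), so the weights
   b x * (x - x0), which vanish at x0, again have vanishing moments. *)
have shifted0 : {in xs, forall x, b x * (x%:R - x0%:R) = 0}.
  apply: IH => // k lt_k.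
  have shift x : b x * (x%:R - x0%:R) * 'C(x, k)%:R =
      k.+1%:R * (b x * 'C(x, k.+1)%:R) + (k%:R - x0%:R) * (b x * 'C(x, k)%:R).
    have := congr1 (GRing.natmul (1 : R)) (mul_bin_shift x k).
    by rewrite !natrD !natrM => e; rewrite mulrBr mulrBl -mulrA e; ring.
  have : \sum_(x <- x0 :: xs) b x * (x%:R - x0%:R) * 'C(x, k)%:R = 0.
    rewrite (eq_bigr _ (fun x _ => shift x)) big_split /= -!mulr_sumr.
    by rewrite (moments0 k.+1 lt_k) (moments0 k (ltnW lt_k)) !mulr0 addr0.
  by rewrite big_cons subrr mulr0 mul0r add0r.
have b_xs0 : {in xs, forall x, b x = 0}.
  move=> x x_xs; apply/eqP; have /eqP := shifted0 x x_xs.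
  rewrite mulf_eq0 subr_eq0 eqr_nat => /orP[// | /eqP x_eq].
  by move: x0_xs; rewrite -x_eq x_xs.
have sum_xs0 : \sum_(x <- xs) b x * 'C(x, 0)%:R = 0.
  by rewrite big_seq big1 // => x /b_xs0 ->; rewrite mul0r.
move=> x; rewrite inE => /predU1P[-> | /b_xs0 //].
by have := moments0 0%N isT; rewrite big_cons sum_xs0 addr0 bin0 mulr1.
Qed.

Lemma coef_eq0_on_binomial_image (R : numDomainType) (I : eqType) (s : seq I)
    (a : I -> R) (f : nat -> I) (c : seq nat) (B : nat -> I -> nat) :
  uniq s -> uniq c -> injective f -> {subset map f c <= s} ->
  (forall k, (k < size c)%N -> \sum_(w <- s) a w * (B k w)%:R = 0) ->
  (forall k, {in s, forall w, w \notin map f c -> a w * (B k w)%:R = 0}) ->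
  (forall k x, B k (f x) = 'C(x, k)) ->
  {in map f c, forall v, a v = 0}.
Proof.
move=> us uc f_inj fc_s rel0 off0 Bf _ /mapP[x xc ->].
apply: (@binomial_moments_eq0 _ c (a \o f) uc _ x xc) => k lt_k.
rewrite -[RHS](rel0 k lt_k) (@sum_supp_subset _ _ s (map f c)) ?big_map ?map_inj_uniq //.
by apply: eq_bigr => y _; rewrite Bf.
Qed.

Local Close Scope ring_scope.

Theorem lemma2p7 (n l m : nat) (eta : eta_t) (a : nat * nat -> CC) (c : seq nat) :
  1 <= n -> 1 <= l <= n -> m <= n - l + 1 -> in_Omega n eta ->
  lin_rel n eta a ->
  size c = m -> sorted ltn c -> all (fun ci => 0 < ci) c ->
  (* first version: E = {(c_1,l),...,(c_m,l)} *)
  ((all (fun ci => (ci, l) \in Teta n eta) c ->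
    (forall u, u \in Teta n eta -> u \notin [seq (ci, l) | ci <- c] ->
       l <= u.2 -> a u = 0%R) ->
    forall v, v \in [seq (ci, l) | ci <- c] -> a v = 0%R)
  /\
  (* second version: E = {(l,c_1),...,(l,c_m)} *)
   (all (fun ci => (l, ci) \in Teta n eta) c ->
    (forall u, u \in Teta n eta -> u \notin [seq (l, ci) | ci <- c] ->
       l <= u.1 -> a u = 0%R) ->
    forall v, v \in [seq (l, ci) | ci <- c] -> a v = 0%R)).
Proof.
move=> _ /andP[l_gt0 l_le_n] m_le _ rel size_c sorted_c _.
have uT : uniq (Teta n eta) by apply: undup_uniq.
have uc : uniq c by apply: sorted_uniq sorted_c; [apply: ltn_trans | apply: ltnn].
have inLambda_c k : k < size c -> inLambda n (k, l) && inLambda n (l, k).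
  by rewrite /inLambda /= addnC andbb size_c => lt_k; apply/andP; split; lia.
split=> E_T off0.
- apply: (@coef_eq0_on_binomial_image _ _ _ a (pair^~ l) c (fun k w => barw w (k, l)) uT uc).
  + by move=> x y [].
  + by move=> _ /mapP[x xc ->]; apply: (allP E_T).
  + by move=> k /inLambda_c /andP[+ _]; apply: rel.
  + move=> k w wT wE; case: (leqP l w.2) => [le_l | /bin_small lt_l].
      by rewrite off0 ?mul0r.
    by rewrite /barw lt_l muln0 mulr0.
  + by move=> k x; rewrite /barw binn muln1.
- apply: (@coef_eq0_on_binomial_image _ _ _ a (pair l) c (fun k w => barw w (l, k)) uT uc).
  + by move=> x y [].
  + by move=> _ /mapP[x xc ->]; apply: (allP E_T).
  + by move=> k /inLambda_c /andP[_]; apply: rel.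
  + move=> k w wT wE; case: (leqP l w.1) => [le_l | /bin_small lt_l].
      by rewrite off0 ?mul0r.
    by rewrite /barw lt_l mul0n mulr0.
  + by move=> k x; rewrite /barw binn mul1n.
Qed.
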